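(* Let $D$ be a digraph (finite, without loops, parallel arcs or digons) and let $S(D)$ be a skeleton of $D$ that admits a simple dicycle intersection graph. If $v\in V(S(D))$ satisfies $d^{+}_{D}(v)=d^{+}_{S(D)}(v)$, then $v\in SV(D)$, i.e. $|N^{+2}_D(v)|\ge|N^{+}_D(v)|$.
   Context: All digraphs are finite, with no loops, no parallel arcs and no digons (a digon is a pair of arcs $u\to w$, $w\to u$). For a digraph $H$ and vertex $v$, $N^{+}_H(v)$ is the set of out-neighbours of $v$ in $H$, $d^{+}_H(v)=|N^{+}_H(v)|$, and $N^{+2}_H(v)$ is the set of vertices $w\notin N^{+}_H(v)\cup\{v\}$ such that $u\to w$ is an arc of $H$ for some $u\in N^{+}_H(v)$; $SV(H)$ is the set of $v$ with $|N^{+2}_H(v)|\ge|N^{+}_H(v)|$. An Eulerian digraph is a (weakly) connected digraph with at least one arc in which $d^{+}(x)=d^{-}(x)$ for every vertex. A skeleton of $D$ is a maximal Eulerian subdigraph of $D$. A cycle decomposition of an Eulerian digraph is a set of dicycles whose arc sets partition its arc set; its dicycle intersection graph is the multigraph whose vertices are these dicycles, with one edge between distinct dicycles $C,C'$ for each vertex lying on both. An Eulerian digraph admits a simple dicycle intersection graph if it has a cycle decomposition whose dicycle intersection graph has no parallel edges (any two distinct dicycles share at most one vertex). *)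

From mathcomp Require Import all_boot.
Set Implicit Arguments. Unset Strict Implicit. Unset Printing Implicit Defensive.

(* A digraph D on the finite vertex type T is an arc relation (V(D) = T). *)
Definition loopless (T : finType) (D : rel T) := forall x, ~~ D x x.
Definition no_digons (T : finType) (D : rel T) := forall x y, D x y -> ~~ D y x.

Definition outN (T : finType) (D : rel T) (v : T) : {set T} := [set w | D v w].
Definition outN2 (T : finType) (D : rel T) (v : T) : {set T} :=
  [set w | (w \notin outN D v) && (w != v) && [exists u in outN D v, D u w]].
Definition SV (T : finType) (D : rel T) : {set T} :=
  [set v | #|outN D v| <= #|outN2 D v|].

Definition subdigraph (T : finType) (D : rel T) (VH : {set T}) (AH : {set T * T}) :=
  forall x y, (x, y) \in AH -> [&& D x y, x \in VH & y \in VH].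

Definition outS (T : finType) (AH : {set T * T}) (v : T) : {set T} :=
  [set w | (v, w) \in AH].
Definition inS (T : finType) (AH : {set T * T}) (v : T) : {set T} :=
  [set u | (u, v) \in AH].

Definition weak_adj (T : finType) (VH : {set T}) (AH : {set T * T}) : rel T :=
  fun a b => [&& a \in VH, b \in VH & ((a, b) \in AH) || ((b, a) \in AH)].
Definition eulerian (T : finType) (VH : {set T}) (AH : {set T * T}) :=
  [/\ forall x y, x \in VH -> y \in VH -> connect (weak_adj VH AH) x y,
      AH != set0 &
      forall x, x \in VH -> #|outS AH x| = #|inS AH x| ].

Definition skeleton (T : finType) (D : rel T) (VS : {set T}) (AS : {set T * T}) :=
  [/\ subdigraph D VS AS, eulerian VS AS &
      forall VH AH, subdigraph D VH AH -> eulerian VH AH ->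
        VS \subset VH -> AS \subset AH -> VH = VS /\ AH = AS ].

(* A dicycle is a duplicate-free vertex sequence of length >= 2, read cyclically. *)
Definition dicycle (T : finType) (c : seq T) := uniq c && (2 <= size c).
Definition cyc_arcs (T : finType) (c : seq T) : {set T * T} :=
  [set p | (p.1 \in c) && (p.2 == next c p.1)].

Definition cycle_decomposition (T : finType) (VH : {set T}) (AH : {set T * T})
    (cs : seq (seq T)) :=
  [/\ forall c, c \in cs -> dicycle c,
      forall c, c \in cs -> cyc_arcs c \subset AH,
      forall i j, i < size cs -> j < size cs -> i != j ->
        [disjoint cyc_arcs (nth [::] cs i) & cyc_arcs (nth [::] cs j)] &
      forall p, p \in AH -> exists2 c, c \in cs & p \in cyc_arcs c ].

Definition admits_simple_dcig (T : finType) (VH : {set T}) (AH : {set T * T}) :=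
  exists cs, cycle_decomposition VH AH cs /\
    forall i j, i < size cs -> j < size cs -> i != j ->
      #|[set x | (x \in nth [::] cs i) && (x \in nth [::] cs j)]| <= 1.

From mathcomp Require Import all_boot.
Set Implicit Arguments. Unset Strict Implicit. Unset Printing Implicit Defensive.

(* Every arc v -> w of D lies in S, hence on a unique dicycle C_w of the
   decomposition. Walking along C_w from w, the first vertex f(w) outside
   N+(v) is preceded by an out-neighbour p of v, so f(w) is in N+2(v); it is
   not v, as v -> p -> v would be a digon. If f(w) = f(w') then C_w and C_w'
   share v and f(w), so they coincide and w = w' is the successor of v on it.
   Thus f injects N+(v) into N+2(v). *)

Section FirstExit.
Variables (T : eqType) (P : pred T).

(* The first vertex failing P when walking along c from w, w itself excluded. *)
Definition first_exit (c : seq T) (w : T) : T :=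
  let s := behead (rot (index w c) c) in nth w s (find (predC P) s).

Lemma first_exitP c w : uniq c -> w \in c -> P w -> has (predC P) c ->
  [/\ first_exit c w \in c, ~~ P (first_exit c w) & P (prev c (first_exit c w))].
Proof.
move=> uc wc Pw hasc; rewrite /first_exit.
have rotE := rot_index wc; rewrite rotE /=.
set s := drop _ _ ++ _ in rotE *; set k := find (predC P) s.
have us : uniq (w :: s) by rewrite -rotE rot_uniq.
have has_s : has (predC P) s.
  by move: hasc; rewrite -(has_rot (index w c)) rotE /= Pw.
have lt_k : k < size (w :: s) by rewrite ltnS ltnW // -has_find.
have memc x : (x \in c) = (x \in w :: s) by rewrite -(mem_rot (index w c)) rotE.
set p := nth w (w :: s) k.
have nextE : next c p = nth w s k.
  by rewrite -(next_rot (index w c) uc) rotE next_nth mem_nth // index_uniq.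
split.
- by rewrite -nextE mem_next memc mem_nth.
- exact: (nth_find w has_s).
- rewrite -nextE prev_next // /p.
  case Ek: k => [|j] //=; have := before_find w (_ : j < k).
  by rewrite Ek => /(_ (ltnSn j)) /negbFE.
Qed.

End FirstExit.

Lemma mem_cyc_arcs (T : finType) (c : seq T) x y :
  ((x, y) \in cyc_arcs c) = (x \in c) && (y == next c x).
Proof. by rewrite inE. Qed.

Lemma prev_in_cyc_arcs (T : finType) (c : seq T) x :
  uniq c -> x \in c -> (prev c x, x) \in cyc_arcs c.
Proof. by move=> uc xc; rewrite mem_cyc_arcs mem_prev xc next_prev ?eqxx. Qed.

Definition simple_intersections (T : finType) (cs : seq (seq T)) :=
  forall i j, i < size cs -> j < size cs -> i != j ->
    #|[set x | (x \in nth [::] cs i) && (x \in nth [::] cs j)]| <= 1.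

Lemma simple_intersections_index (T : finType) (cs : seq (seq T)) i j x y :
  simple_intersections cs -> i < size cs -> j < size cs -> x != y ->
  x \in nth [::] cs i -> y \in nth [::] cs i ->
  x \in nth [::] cs j -> y \in nth [::] cs j -> i = j.
Proof.
move=> simple lt_i lt_j neq_xy xi yi xj yj.
have sub : [set x; y] \subset [set z | (z \in nth [::] cs i) && (z \in nth [::] cs j)].
  by apply/subsetP => z; rewrite !inE => /orP [] /eqP ->; apply/andP.
have := subset_leq_card sub; rewrite cards2 neq_xy => two_le.
by apply/eqP; apply: contraTT two_le => neq_ij; rewrite -leqNgt simple.
Qed.

Section CycleDecomposition.
Variables (T : finType) (VH : {set T}) (AH : {set T * T}) (cs : seq (seq T)).
Hypothesis decomp : cycle_decomposition VH AH cs.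

Definition cycle_index (a : T * T) := find (fun c => a \in cyc_arcs c) cs.
Definition cycle_through (a : T * T) := nth [::] cs (cycle_index a).

Lemma cycle_throughP a : a \in AH ->
  [/\ cycle_index a < size cs, uniq (cycle_through a),
      cyc_arcs (cycle_through a) \subset AH & a \in cyc_arcs (cycle_through a)].
Proof.
case: decomp => dicyc sub _ cover /cover [c c_cs a_c].
have has_a : has (fun c => a \in cyc_arcs c) cs by apply/hasP; exists c.
have lt_a : cycle_index a < size cs by rewrite -has_find.
have /andP [uc _] := dicyc _ (mem_nth [::] lt_a).
by split; [| | exact/sub/mem_nth | exact: (nth_find [::] has_a)].
Qed.

End CycleDecomposition.

Lemma mem_outN2 (T : finType) (D : rel T) v p x : no_digons D ->
  D v p -> D p x -> x \notin outN D v -> x \in outN2 D v.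
Proof.
move=> nodig vp px xN; rewrite inE xN /=; apply/andP; split.
  by apply: contraTneq px => ->; apply: nodig.
by apply/existsP; exists p; rewrite inE vp.
Qed.

Section OutNeighboursOnSimpleCycles.
Variables (T : finType) (D : rel T).
Hypotheses (noloop : loopless D) (nodig : no_digons D).
Variables (VH : {set T}) (AH : {set T * T}) (cs : seq (seq T)).
Hypotheses (subH : subdigraph D VH AH) (decomp : cycle_decomposition VH AH cs).
Hypothesis simple : simple_intersections cs.
Variable v : T.
Hypothesis outN_sub : outN D v \subset outS AH v.

Definition exit_of (w : T) :=
  first_exit (D v) (cycle_through cs (v, w)) w.

Lemma exit_ofP w : w \in outN D v ->
  [/\ cycle_index cs (v, w) < size cs, v \in cycle_through cs (v, w),
      next (cycle_through cs (v, w)) v = w,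
      exit_of w \in cycle_through cs (v, w) & exit_of w \in outN2 D v].
Proof.
move=> vw; have vwH : (v, w) \in AH by have := subsetP outN_sub w vw; rewrite inE.
have [lt_vw uc sub] := cycle_throughP decomp vwH.
set c := cycle_through cs (v, w); rewrite mem_cyc_arcs => /andP [vc /eqP nextE].
have wc : w \in c by rewrite nextE mem_next.
have exits : has (predC (D v)) c by apply/hasP; exists v; rewrite //= noloop.
have Dvw : D v w by rewrite inE in vw.
have [xc xN Pp] := first_exitP uc wc Dvw exits.
have arcD p q : (p, q) \in cyc_arcs c -> D p q.
  by move=> /(subsetP sub) /subH /and3P [].
split=> //; apply: (mem_outN2 nodig Pp (arcD _ _ (prev_in_cyc_arcs uc xc))).
by rewrite inE.
Qed.

Lemma exit_of_inj : {in outN D v &, injective exit_of}.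
Proof.
move=> w1 w2 vw1 vw2 eq_exit.
have [lt1 v1 next1 x1 N2x1] := exit_ofP vw1.
have [lt2 v2 next2 x2 _] := exit_ofP vw2.
have xv : exit_of w1 != v by move: N2x1; rewrite inE => /andP [/andP [_ ->]].
have same : cycle_index cs (v, w1) = cycle_index cs (v, w2).
  by apply: (simple_intersections_index simple lt1 lt2 xv x1 v1 _ v2); rewrite eq_exit.
by rewrite -next1 -next2 /cycle_through same.
Qed.

Lemma card_outN_le_outN2 : #|outN D v| <= #|outN2 D v|.
Proof.
rewrite -(card_in_imset exit_of_inj); apply: subset_leq_card.
by apply/subsetP => _ /imsetP [w vw ->]; have [] := exit_ofP vw.
Qed.

End OutNeighboursOnSimpleCycles.

Lemma outS_sub_outN (T : finType) (D : rel T) VH AH v :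
  subdigraph D VH AH -> outS AH v \subset outN D v.
Proof. by move=> subH; apply/subsetP => w; rewrite !inE => /subH /and3P []. Qed.

Theorem theorem3p3 (T : finType) (D : rel T)
  (hloop : loopless D) (hdig : no_digons D)
  (VS : {set T}) (AS : {set T * T})
  (hskel : skeleton D VS AS) (hsimple : admits_simple_dcig VS AS)
  (v : T) (hv : v \in VS) (hdeg : #|outN D v| = #|outS AS v|) :
  v \in SV D.
Proof.
have [subS _ _] := hskel; have [cs [decomp simple]] := hsimple.
have outN_sub : outN D v \subset outS AS v.
  have /eqP <- // : outS AS v == outN D v.
  by rewrite eqEcard (outS_sub_outN v subS) hdeg /=.
by rewrite inE (card_outN_le_outN2 hloop hdig subS decomp simple outN_sub).
Qed.
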